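(* Every width-$k$ puzzle that is a USP (in particular every strong USP) has size at most $2^k$.
   Context: A width-$k$ puzzle is a finite set $P \subseteq \{1,2,3\}^k$, of size $|P|$; for $r\in P$, $r_c$ is the $c$-th coordinate. $\mathrm{Sym}(P)$ is the group of permutations of $P$. $P$ is a USP if for all $\pi_1,\pi_2,\pi_3 \in \mathrm{Sym}(P)$, either $\pi_1=\pi_2=\pi_3$, or there exist $r \in P$ and $c \in [k]$ such that at least two of $(\pi_1(r))_c = 1$, $(\pi_2(r))_c = 2$, $(\pi_3(r))_c = 3$ hold. $P$ is a strong USP if the same holds with ''at least two'' replaced by ''exactly two''. *)

From mathcomp Require Import all_boot all_fingroup.
Set Implicit Arguments. Unset Strict Implicit. Unset Printing Implicit Defensive.

(* Convention: the alphabet {1,2,3} is encoded as 'I_3, with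
   ord 0 <-> 1, ord 1 <-> 2, ord 2 <-> 3.  A row of width k is a
   k.-tuple 'I_3; a width-k puzzle is a (finite) set of rows. *)
Definition row (k : nat) := (k.-tuple 'I_3)%type.
Definition puzzle (k : nat) := {set row k}.

Definition one3 : 'I_3 := @Ordinal 3 0 isT.
Definition two3 : 'I_3 := @Ordinal 3 1 isT.
Definition three3 : 'I_3 := @Ordinal 3 2 isT.

(* The elements of P, as a finite type; Sym(P) = {perm elems P}. *)
Definition elems (k : nat) (P : puzzle k) := {x : row k | x \in P}.

Definition is_USP (k : nat) (P : puzzle k) : Prop :=
  forall pi1 pi2 pi3 : {perm elems P},
    (pi1 = pi2 /\ pi2 = pi3) \/
    exists (r : elems P) (c : 'I_k),
      2 <= (tnth (val (pi1 r)) c == one3)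
           + (tnth (val (pi2 r)) c == two3)
           + (tnth (val (pi3 r)) c == three3).

From mathcomp Require Import all_boot all_fingroup.
Set Implicit Arguments. Unset Strict Implicit. Unset Printing Implicit Defensive.

(* Two distinct rows of a USP have different sets of 1-coordinates: otherwise
   take pi1 = id and pi2 = pi3 = the transposition of the two rows.  Since
   pi2 r = pi3 r, at most one of the last two conditions can hold at any
   (r, c), so the first must hold too: r_c = 1 and (pi2 r)_c is 2 or 3.  But
   the transposition preserves the set of 1-coordinates, so (pi2 r)_c = 1.
   Hence r |-> {c | r_c = 1} is injective and |P| <= 2^k. *)

Definition ones (k : nat) (x : row k) : {set 'I_k} :=
  [set c | tnth x c == one3].

Lemma card_set_ord (k : nat) : #|{set 'I_k}| = 2 ^ k.
Proof. by rewrite -cardsT -powersetT card_powerset cardsT card_ord. Qed.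

Lemma two_hits_same_entry (b : bool) (x : 'I_3) :
  2 <= b + (x == two3) + (x == three3) -> b && (x != one3).
Proof. by case: b; case: x => [[|[|[|m]]] Hm]. Qed.

Lemma ones_tperm (k : nat) (P : puzzle k) (a b r : elems P) :
  ones (val a) = ones (val b) -> ones (val (tperm a b r)) = ones (val r).
Proof. by move=> eq_ab; case: tpermP => [->|->|_ _]. Qed.

Lemma USP_ones_inj (k : nat) (P : puzzle k) :
  is_USP P -> {in P &, injective (@ones k)}.
Proof.
move=> uspP x y Px Py eq_xy.
pose a : elems P := Sub x Px; pose b : elems P := Sub y Py.
apply/eqP; apply/negPn/negP => neq_xy.
have neq_ab : a != b by apply: contra neq_xy => /eqP[->].
have [[id_swap _] | [r [c hits]]] := uspP 1%g (tperm a b) (tperm a b).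
  by move/permP/(_ a)/eqP: id_swap; rewrite perm1 tpermL (negbTE neq_ab).
move: hits; rewrite perm1 => /two_hits_same_entry/andP[r_one s_not_one].
have : c \in ones (val (tperm a b r)) by rewrite (@ones_tperm _ _ a b) // inE.
by rewrite inE (negbTE s_not_one).
Qed.

Theorem mainTheorem4 (k : nat) (P : puzzle k) :
  is_USP P -> #|P| <= 2 ^ k.
Proof.
move=> uspP; rewrite -(card_in_imset (USP_ones_inj uspP)) -card_set_ord.
exact: max_card.
Qed.
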